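(* Let $\mathcal G$ be the graph defined below. There is no mixed $1$-stack $1$-queue layout $(<,\{S,Q\})$ of $\mathcal G$ for which there exist edges $(v_1,v_2)\in Q$, $(u_1,u_2)\in S$ and a pair of twins $s,t$ with $v_1<u_1<s<t<u_2<v_2$.
   Context: Graph $\mathcal G$: take two vertices $A,B$ and $19$ copies of a gadget $H$, identified at $A$ and $B$. Each copy of $H$ consists of two further vertices $s,t$ (called twins) joined by the twin edge $(s,t)$, the edges $(A,s),(A,t),(B,s),(B,t)$, and seven further vertices (called connectors), each of degree $2$ and adjacent to exactly $s$ and $t$. ($A$ and $B$ are not adjacent.) For a vertex ordering $<$ and an edge $e$, let $L(e)<R(e)$ be its endpoints; edges $e,f$ cross if $L(e)<L(f)<R(e)<R(f)$ and nest if $L(e)<L(f)<R(f)<R(e)$. A stack is an edge set with no two crossing edges, a queue an edge set with no two nested edges. A mixed $1$-stack $1$-queue layout is a vertex ordering $<$ together with a partition of the edge set into a stack $S$ and a queue $Q$. *)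

From mathcomp Require Import all_boot.
Set Implicit Arguments. Unset Strict Implicit. Unset Printing Implicit Defensive.

(* Vertices of G: A (= inl (inl false)), B (= inl (inl true)),
   twins (copy i, side b) = inl (inr (i, b)), connectors (copy i, index j) = inr (i, j). *)
Definition V : finType := ((bool + ('I_19 * bool)) + ('I_19 * 'I_7))%type.

Definition vA : V := inl (inl false).
Definition vB : V := inl (inl true).
Definition twin (i : 'I_19) (b : bool) : V := inl (inr (i, b)).
Definition conn (i : 'I_19) (j : 'I_7) : V := inr (i, j).

(* adjacency of G: A,B ~ every twin; twins of the same copy adjacent (twin edge);
   each connector adjacent exactly to the two twins of its copy; A,B not adjacent. *)
Definition adj (x y : V) : bool :=
  match x, y with
  | inl (inl _), inl (inr _) => true
  | inl (inr _), inl (inl _) => true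
  | inl (inr (i, b)), inl (inr (i', b')) => (i == i') && (b != b')
  | inl (inr (i, _)), inr (i', _) => i == i'
  | inr (i, _), inl (inr (i', _)) => i == i'
  | _, _ => false
  end.

Definition edges : {set {set V}} :=
  [set e : {set V} | [exists x : V, exists y : V, adj x y && (e == [set x; y])]].

(* A vertex ordering is given by an injective position map p : V -> nat
   (x < y iff p x < p y).  An edge set is a stack if no two of its edges cross,
   a queue if no two of its edges nest. *)
Definition is_stack (p : V -> nat) (S : {set {set V}}) : Prop :=
  forall a b c d, [set a; b] \in S -> [set c; d] \in S ->
    ~ [/\ p a < p c, p c < p b & p b < p d].

Definition is_queue (p : V -> nat) (Q : {set {set V}}) : Prop :=
  forall a b c d, [set a; b] \in Q -> [set c; d] \in Q ->
    ~ [/\ p a < p c, p c < p d & p d < p b].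

Definition mixed_layout (p : V -> nat) (S Q : {set {set V}}) : Prop :=
  [/\ injective p, S :|: Q = edges, S :&: Q = set0, is_stack p S & is_queue p Q].

From mathcomp Require Import all_boot.
From mathcomp Require Import zify.

(* Fix the queue edge v1v2, the stack edge u1u2 and the twins s < t of the
   statement, and look at the seven connectors of that copy, all adjacent to s
   and t.  A connector strictly inside (v1, v2) has both its edges in the
   stack, since in the queue they would nest inside v1v2; a connector outside
   has both its edges in the queue, since in the stack they would cross u1u2.
   Two connectors whose edges share a page and which lie in the same gap of
   {s, t} (for the queue necessarily an outer gap, as the middle one lies
   inside u1u2) produce a crossing pair of stack edges or a nested pair of
   queue edges.  This leaves room for at most 3 + 2 < 7 connectors. *)

Lemma card_le_bounded_inj {T : finType} {n : nat} {f : T -> nat} :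
  injective f -> (forall x, f x < n) -> #|T| <= n.
Proof.
move=> f_inj f_lt; pose g x : 'I_n := Ordinal (f_lt x).
have g_inj : injective g by move=> x y /(congr1 val) /f_inj.
by rewrite -[n in _ <= n]card_ord; apply: leq_card g_inj.
Qed.

Lemma adj_irrefl x : ~~ adj x x.
Proof. by case: x => [[[]|[i []]]|[i j]] //=; rewrite eqxx. Qed.

Lemma adj_edge x y : adj x y -> [set x; y] \in edges.
Proof.
move=> xy; rewrite inE; apply/existsP; exists x; apply/existsP; exists y.
by rewrite xy eqxx.
Qed.

Lemma conn_adj i j b : adj (conn i j) (twin i b).
Proof. by rewrite /adj /= eqxx. Qed.

Section OneGap.

Variables (p : V -> nat) (P : {set {set V}}) (s t c1 c2 : V).
Hypotheses (st : p s < p t) (c12 : p c1 < p c2)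
  (c1s : [set c1; s] \in P) (c1t : [set c1; t] \in P)
  (c2s : [set c2; s] \in P) (c2t : [set c2; t] \in P).

Lemma stack_K22_same_gap :
  is_stack p P -> [|| p c2 < p s, (p s < p c1) && (p c2 < p t) | p t < p c1] ->
  False.
Proof.
move=> stackP /or3P[c2_s | /andP[s_c1 c2_t] | t_c1].
- exact: (stackP c1 s c2 t).
- by apply: (stackP s c2 c1 t); rewrite // setUC.
- by apply: (stackP s c1 t c2); rewrite 1?setUC.
Qed.

Lemma queue_K22_same_outer_gap :
  is_queue p P -> p c2 < p s \/ p t < p c1 -> False.
Proof.
move=> queueP [c2_s | t_c1].
- exact: (queueP c1 t c2 s).
- by apply: (queueP s c2 t c1); rewrite 1?setUC.
Qed.

End OneGap.

Arguments stack_K22_same_gap {p P s t c1 c2}.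
Arguments queue_K22_same_outer_gap {p P s t c1 c2}.

Section MixedLayout.

Variables (p : V -> nat) (S Q : {set {set V}}).
Hypotheses (p_inj : injective p) (SQ : S :|: Q = edges)
  (stackS : is_stack p S) (queueQ : is_queue p Q).

Lemma edge_in_stack_or_queue {x y} : adj x y -> [set x; y] \in S \/ [set x; y] \in Q.
Proof. by move=> /adj_edge; rewrite -SQ inE => /orP. Qed.

Lemma nested_edge_in_stack v1 v2 x y : [set v1; v2] \in Q -> adj x y ->
  p v1 < p x < p v2 -> p v1 < p y < p v2 -> [set x; y] \in S.
Proof.
move=> v12 xy /andP[v1x xv2] /andP[v1y yv2].
case: (edge_in_stack_or_queue xy) => // xyQ; exfalso.
case: (ltngtP (p x) (p y)) => [lt | gt | /p_inj eq_xy].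
- exact: (queueQ v1 v2 x y).
- by apply: (queueQ v1 v2 y x); rewrite // setUC.
- by move: xy; rewrite eq_xy (negbTE (adj_irrefl y)).
Qed.

Lemma crossing_edge_in_queue u1 u2 x y : [set u1; u2] \in S -> adj x y ->
  p u1 < p y < p u2 -> p x < p u1 \/ p u2 < p x -> [set x; y] \in Q.
Proof.
move=> u12 xy /andP[u1y yu2] x_out.
case: (edge_in_stack_or_queue xy) => // xyS; exfalso.
case: x_out => [xu1 | u2x].
- exact: (stackS x y u1 u2).
- by apply: (stackS u1 u2 y x); rewrite // setUC.
Qed.

Section Connectors.

Variables (v1 v2 u1 u2 : V) (i : 'I_19) (b : bool).
Local Notation s := (twin i b).
Local Notation t := (twin i (~~ b)).
Local Notation c j := (conn i j).
Hypotheses (v12 : [set v1; v2] \in Q) (u12 : [set u1; u2] \in S)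
  (v1u1 : p v1 < p u1) (u1s : p u1 < p s) (st : p s < p t)
  (tu2 : p t < p u2) (u2v2 : p u2 < p v2).

Let twin_between_u b' : p u1 < p (twin i b') < p u2.
Proof. have [->|->] : b' = b \/ b' = ~~ b by case: (b); case: b'; auto. all: lia. Qed.

Lemma conn_edges_inside j b' : p v1 < p (c j) < p v2 -> [set c j; twin i b'] \in S.
Proof.
move=> cj; apply: nested_edge_in_stack v12 (conn_adj i j b') cj _.
by have := twin_between_u b'; lia.
Qed.

Lemma conn_edges_outside j b' : ~~ (p v1 < p (c j) < p v2) -> [set c j; twin i b'] \in Q.
Proof.
move=> cj; apply: crossing_edge_in_queue u12 (conn_adj i j b') (twin_between_u b') _.
by lia.
Qed.

(* The first two summands locate c j among the three gaps of {s, t}; the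
   offset 3 separates stack-connectors from queue-connectors.  Queue-connectors
   never take the value 4, but the crude bound 6 < 7 suffices. *)
Definition conn_key j : nat :=
  (p s < p (c j)) + (p t < p (c j)) + 3 * ~~ (p v1 < p (c j) < p v2).

Lemma conn_key_lt6 j : conn_key j < 6.
Proof. by rewrite /conn_key; case: (p s < _); case: (p t < _); case: (_ && _). Qed.

Lemma conn_key_neq {j1 j2} : p (c j1) < p (c j2) -> conn_key j1 != conn_key j2.
Proof.
move=> c12; apply/eqP; rewrite /conn_key => same_key.
have pos_neq j b' : p (c j) != p (twin i b') by apply/eqP => /p_inj.
move: (pos_neq j1 b) (pos_neq j1 (~~ b)) (pos_neq j2 b) (pos_neq j2 (~~ b)) => ? ? ? ?.
case: (boolP (p v1 < p (c j1) < p v2)) => in1;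
  case: (boolP (p v1 < p (c j2) < p v2)) => in2.
- apply: (stack_K22_same_gap st c12 _ _ _ _ stackS); rewrite ?conn_edges_inside //.
  by move: same_key; rewrite in1 in2; lia.
- by move: same_key; rewrite in1 in2; lia.
- by move: same_key; rewrite in1 in2; lia.
- apply: (queue_K22_same_outer_gap st c12 _ _ queueQ); rewrite ?conn_edges_outside //.
  by move: same_key; rewrite (negbTE in1) (negbTE in2); lia.
Qed.

Lemma conn_key_inj : injective conn_key.
Proof.
move=> j1 j2 same_key.
case: (ltngtP (p (c j1)) (p (c j2))) => [lt | gt | /p_inj []] //.
- by move/eqP: same_key; rewrite (negbTE (conn_key_neq lt)).
- by move/eqP: same_key; rewrite eq_sym (negbTE (conn_key_neq gt)).
Qed.

End Connectors.

End MixedLayout.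

Theorem lemma2 :
  ~ exists (p : V -> nat) (S Q : {set {set V}}),
      mixed_layout p S Q /\
      exists (v1 v2 u1 u2 : V) (i : 'I_19) (b : bool),
        [/\ [set v1; v2] \in Q, [set u1; u2] \in S &
            let s := twin i b in let t := twin i (~~ b) in
            [/\ p v1 < p u1, p u1 < p s, p s < p t, p t < p u2 & p u2 < p v2]].
Proof.
case=> p [S [Q [[p_inj SQ _ stackS queueQ] [v1 [v2 [u1 [u2 [i [b]]]]]]]]].
case=> v12 u12 /= [v1u1 u1s st tu2 u2v2].
have key_inj : injective (conn_key p v1 v2 i b).
  by apply: (@conn_key_inj p S Q _ _ _ _ v1 v2 u1 u2).
by have := card_le_bounded_inj key_inj (@conn_key_lt6 p v1 v2 i b); rewrite card_ord.
Qed.
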